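(* For every finite simple undirected graph $G$, $\chi_{pcf}(G)\leq 2\,\mathrm{scol}_{2}(G)-1$.
   Context: All graphs are finite, simple and undirected. For a graph $G$, a $c$-colouring is a function $\psi:V(G)\to C$ with $|C|\le c$; it is proper if $\psi(u)\neq\psi(v)$ for every edge $uv$. With $N(v)=\{w: vw\in E(G)\}$, a colouring $\psi$ is conflict-free if for every vertex $v$ with $|N(v)|>0$ there is a colour $\alpha$ such that exactly one $w\in N(v)$ has $\psi(w)=\alpha$. The proper conflict-free chromatic number $\chi_{pcf}(G)$ is the minimum $c$ such that $G$ has a proper conflict-free $c$-colouring. For a total order $\preceq$ of $V(G)$, a vertex $v$ and an integer $s\ge1$, let $R(G,\preceq,v,s)$ be the set of vertices $w$ such that $w\preceq v$ and there is a path $v=w_0,w_1,\dots,w_{s'}=w$ of length $s'\in\{0,1,\dots,s\}$ with $v\prec w_i$ for all $i\in\{1,\dots,s'-1\}$. The $s$-strong colouring number $\mathrm{scol}_s(G)$ is the minimum integer $c$ such that there is a total order $\preceq$ of $V(G)$ with $|R(G,\preceq,v,s)|\le c$ for every vertex $v$. *)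

From mathcomp Require Import all_boot.
Set Implicit Arguments. Unset Strict Implicit. Unset Printing Implicit Defensive.

Record sgraph := SGraph {
  vert :> finType;
  adj : rel vert;
  adj_sym : symmetric adj;
  adj_irr : irreflexive adj }.

Section Defs.
Variable G : sgraph.

Definition proper_col c (f : {ffun G -> 'I_c}) : bool :=
  [forall u : G, forall v : G, adj u v ==> (f u != f v)].

Definition conflict_free c (f : {ffun G -> 'I_c}) : bool :=
  [forall v : G, [exists w : G, adj v w] ==>
     [exists a : 'I_c, #|[set w : G | adj v w & f w == a]| == 1]].

Definition has_pcf (c : nat) : bool :=
  [exists f : {ffun G -> 'I_c}, proper_col f && conflict_free f].

Lemma has_pcf_ex : exists c, has_pcf c.
Proof.
exists #|G|; apply/existsP; exists [ffun x => enum_rank x].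
apply/andP; split.
  apply/forallP => u; apply/forallP => v; apply/implyP => huv.
  rewrite !ffunE; apply/negP => /eqP /enum_rank_inj huv'.
  by move: huv; rewrite huv' (@adj_irr G v).
apply/forallP => v; apply/implyP => /existsP [w hw].
apply/existsP; exists (enum_rank w); apply/eqP.
suff -> : [set x : G | adj v x & [ffun x => enum_rank x] x == enum_rank w] = [set w].
  by rewrite cards1.
apply/setP => x.
rewrite !inE ffunE; apply/andP/eqP.
  by case=> _ /eqP /enum_rank_inj.
by move=> ->; rewrite hw eqxx.
Qed.

Definition chi_pcf : nat := ex_minn has_pcf_ex.

(* A total order on V(G) is represented by an injective rank function
   r : V -> 'I_#|V| ;  x <= y  iff  r x <= r y. *)
Definition Rset2 (r : {ffun G -> 'I_#|G|}) (v : G) : {set G} :=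
  [set w : G | (r w <= r v) &&
     [|| w == v, adj v w | [exists u : G, [&& adj v u, adj u w & r v < r u]]]].

Definition has_scol2 (c : nat) : bool :=
  [exists r : {ffun G -> 'I_#|G|}, injectiveb r && [forall v : G, #|Rset2 r v| <= c]].

Lemma has_scol2_ex : exists c, has_scol2 c.
Proof.
exists #|G|; apply/existsP; exists [ffun x => enum_rank x].
apply/andP; split.
  by apply/injectiveP => x y; rewrite !ffunE => /enum_rank_inj.
by apply/forallP => v; apply: max_card.
Qed.

Definition scol2 : nat := ex_minn has_scol2_ex.

End Defs.

From mathcomp Require Import all_boot.
From mathcomp Require Import zify.

Set Implicit Arguments.
Unset Strict Implicit.
Unset Printing Implicit Defensive.

(* Fix an order witnessing scol_2(G) = k and let m(u) be the least neighbour
   of u.  Colour greedily along the order, giving x a colour that differs from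
   those of the earlier vertices among its neighbours and the m(u), u in N(x).
   Each such vertex lies in R(x) \ {x}, or is m(u) for a neighbour u of x in
   R(x) \ {x}, so at most 2(k - 1) colours are excluded.  The colouring is
   proper, and the colour of m(v) occurs only once in N(v): any other
   neighbour y of v comes after m(v), and m(v) is one of the vertices y had
   to avoid since v is a neighbour of y. *)

Lemma exists_fresh_colour (T : finType) c (f : T -> 'I_c) (A : {set T}) :
  #|A| < c -> exists a, a \notin f @: A.
Proof.
move=> ltAc; have: 0 < #|~: (f @: A)|.
  by have := cardsC (f @: A); have := leq_imset_card f A; rewrite card_ord; lia.
by case/card_gt0P=> a; rewrite inE; exists a.
Qed.

Lemma greedy_colouring (T : finType) c (rk : T -> nat) (F : T -> {set T}) :
    (forall x y, y \in F x -> rk y < rk x) -> (forall x, #|F x| < c) ->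
  exists f : {ffun T -> 'I_c}, forall x y, y \in F x -> f x != f y.
Proof.
move=> rkF ltFc.
suff [f fF]: exists f : {ffun T -> 'I_c},
    forall x y, rk x < (\max_z rk z).+1 -> y \in F x -> f x != f y.
  by exists f => x y; apply: fF; rewrite ltnS leq_bigmax.
elim: (\max_z rk z).+1 => [|n [f fF]].
  by exists [ffun x => Ordinal (leq_ltn_trans (leq0n _) (ltFc x))].
pose f' := [ffun z => if rk z == n then odflt (f z) [pick a | a \notin f @: F z]
                      else f z].
exists f' => x y ltxn yFx.
have -> : f' y = f y.
  by rewrite ffunE; case: (rk y =P n) => // yn; have := rkF x y yFx; lia.
rewrite ffunE; case: (rk x =P n) => [_|xn]; last by apply: (fF _ _ _ yFx); lia.
have [a fresh] := exists_fresh_colour f (ltFc x).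
case: pickP => [b /= fresh_b|/(_ a)]; last by rewrite fresh.
by apply: contraNneq fresh_b => ->; apply: imset_f.
Qed.

Section LeastNeighbourColouring.

Variables (G : sgraph) (r : {ffun G -> 'I_#|G|}).
Hypothesis r_inj : injective r.

Lemma eq_rank u v : (r u == r v :> nat) = (u == v).
Proof. by rewrite (inj_eq val_inj) (inj_eq r_inj). Qed.

Lemma adj_rank_neq u v : adj u v -> r u != r v :> nat.
Proof. by rewrite eq_rank; apply: contraTneq => ->; rewrite adj_irr. Qed.

Definition least_nbr (u : G) : G :=
  if [pick w | adj u w] is Some w0 then [arg min_(w < w0 | adj u w) r w] else u.

Lemma least_nbrP u w : adj u w -> adj u (least_nbr u) /\ r (least_nbr u) <= r w.
Proof.
move=> uw; rewrite /least_nbr; case: pickP => [w0 uw0|/(_ w)]; last by rewrite uw.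
by case: arg_minnP => // v uv vmin; split; last exact: vmin.
Qed.

Definition back_nbrs (x : G) : {set G} := [set u | adj x u & r u < r x].

Definition blocked (x : G) : {set G} :=
  [set y | r y < r x & adj x y || [exists u, adj x u && (least_nbr u == y)]].

Lemma back_nbrs_sub x : back_nbrs x \subset Rset2 r x :\ x.
Proof.
apply/subsetP => u; rewrite !inE => /andP[xu ltux].
by rewrite xu orbT (ltnW ltux) -eq_rank neq_ltn ltux.
Qed.

Lemma blocked_rank_lt x y : y \in blocked x -> r y < r x.
Proof. by rewrite inE => /andP[]. Qed.

Lemma blocked_sub x : blocked x \subset (Rset2 r x :\ x) :|: least_nbr @: back_nbrs x.
Proof.
apply/subsetP => y; rewrite inE => /andP[ltyx].
case/orP=> [xy|/existsP[u /andP[xu /eqP yE]]]; last subst y.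
  by rewrite inE (subsetP (back_nbrs_sub x)) // inE xy ltyx.
have := adj_rank_neq xu; rewrite neq_ltn => /orP[ltxu|ltux]; last first.
  by rewrite inE orbC imset_f // inE xu ltux.
have ux : adj u x by rewrite adj_sym.
have [u_mu _] := least_nbrP ux.
rewrite !inE -eq_rank neq_ltn ltyx (ltnW ltyx) /=.
by apply/orP; left; apply/or3P/Or33/existsP; exists u; rewrite xu u_mu ltxu.
Qed.

Lemma card_blocked x : #|blocked x| < 2 * #|Rset2 r x| - 1.
Proof.
have Rx : x \in Rset2 r x by rewrite inE leqnn eqxx.
have := cardsD1 x (Rset2 r x); rewrite Rx add1n.
have := subset_leq_card (blocked_sub x).
have := (leq_card_setU (Rset2 r x :\ x) (least_nbr @: back_nbrs x)).1.
have := leq_imset_card least_nbr (back_nbrs x).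
have := subset_leq_card (back_nbrs_sub x).
lia.
Qed.

Section BlockedColouring.

Variables (c : nat) (f : {ffun G -> 'I_c}).
Hypothesis f_blocked : forall x y, y \in blocked x -> f x != f y.

Lemma proper_blocked : proper_col f.
Proof.
apply/forallP => u; apply/forallP => v; apply/implyP => uv.
have := adj_rank_neq uv; rewrite neq_ltn => /orP[ltuv|ltvu].
  by rewrite eq_sym f_blocked // inE ltuv adj_sym uv.
by rewrite f_blocked // inE ltvu uv.
Qed.

Lemma conflict_free_blocked : conflict_free f.
Proof.
apply/forallP => v; apply/implyP => /existsP[w vw].
apply/existsP; exists (f (least_nbr v)); apply/eqP.
have [v_mv _] := least_nbrP vw.
suff -> : [set y | adj v y & f y == f (least_nbr v)] = [set least_nbr v].
  exact: cards1.
apply/setP => y; rewrite !inE; apply/andP/eqP => [[vy /eqP fy]|->]; last first.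
  by rewrite v_mv eqxx.
apply/eqP/contraT => ymv.
suff : f y != f (least_nbr v) by rewrite fy eqxx.
apply: f_blocked.
have [_] := least_nbrP vy; rewrite leq_eqVlt eq_rank eq_sym (negPf ymv) /= => lt_mv_y.
rewrite inE lt_mv_y /=; apply/orP; right; apply/existsP; exists v.
by rewrite adj_sym vy eqxx.
Qed.

End BlockedColouring.

End LeastNeighbourColouring.

Theorem theorem1 (G : sgraph) : chi_pcf G <= 2 * scol2 G - 1.
Proof.
rewrite /scol2; case: ex_minnP => k /existsP[r /andP[/injectiveP r_inj /forallP Rk]] _.
rewrite /chi_pcf; case: ex_minnP => c _; apply.
have card_blocked_lt x : #|blocked r x| < 2 * k - 1.
  by apply: leq_trans (card_blocked r_inj x) _; have := Rk x; lia.
have [f f_blocked] := greedy_colouring (@blocked_rank_lt G r) card_blocked_lt.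
apply/existsP; exists f.
by rewrite (proper_blocked r_inj f_blocked) (conflict_free_blocked r_inj f_blocked).
Qed.
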